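(* Let $E$ be a Banach lattice and let $\mathrm{l\text{-}Lwc}(E)$ denote the set of limitedly L-weakly compact operators $E\to E$. Then $\mathrm{l\text{-}Lwc}(E)$ is a norm-closed right ideal in the algebra $\mathrm{L}(E)$ of all bounded operators on $E$ (that is, a closed linear subspace such that $TS\in\mathrm{l\text{-}Lwc}(E)$ whenever $T\in\mathrm{l\text{-}Lwc}(E)$ and $S\in\mathrm{L}(E)$), and hence a subalgebra of $\mathrm{L}(E)$; moreover, this subalgebra is unital if and only if the identity operator $I_E$ is limitedly L-weakly compact.
   Context: All vector spaces are real and operators are linear and bounded. For a subset $A$ of a Banach lattice $F$, $\mathrm{sol}(A)=\bigcup_{a\in A}[-|a|,|a|]$. A subset $A\subseteq F$ is an Lwc-set if every disjoint sequence in $\mathrm{sol}(A)$ is norm-null. A bounded subset $A$ of a Banach space $X$ is limited if every weak$^\ast$-null sequence in $X'$ converges to $0$ uniformly on $A$. An operator $T:X\to F$ is limitedly L-weakly compact if $T$ maps every limited subset of $X$ onto an Lwc-subset of $F$. *)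

From HB Require Import structures.
From mathcomp Require Import all_boot all_order all_algebra.
From mathcomp Require Import all_classical all_reals all_analysis.
Set Implicit Arguments. Unset Strict Implicit. Unset Printing Implicit Defensive.
Import Order.TTheory GRing.Theory Num.Theory.
Import numFieldNormedType.Exports.
Local Open Scope classical_set_scope.
Local Open Scope ring_scope.

(* A Banach lattice structure on a (real) Banach space E: a join operation
   making E a join-semilattice (order x <= y :<-> join x y = y), compatible
   with the vector structure (so E is a Riesz space / vector lattice), and
   a lattice norm: |x| <= |y| implies ||x|| <= ||y||. *)
Record banach_lattice (R : realType) (E : completeNormedModType R) := BanachLattice {
  bl_join : E -> E -> E;
  bl_joinC : forall x y, bl_join x y = bl_join y x;
  bl_joinA : forall x y z, bl_join x (bl_join y z) = bl_join (bl_join x y) z;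
  bl_joinxx : forall x, bl_join x x = x;
  bl_le_add : forall x y z, bl_join x y = y -> bl_join (x + z) (y + z) = y + z;
  bl_le_scale : forall (a : R) x y, 0 <= a -> bl_join x y = y ->
      bl_join (a *: x) (a *: y) = a *: y;
  bl_norm_mono : forall x y,
      bl_join (bl_join x (- x)) (bl_join y (- y)) = bl_join y (- y) ->
      `|x| <= `|y|
}.

Section BL.
Context {R : realType} {E : completeNormedModType R} (L : banach_lattice E).

Definition bl_le (x y : E) : Prop := bl_join L x y = y.
Definition bl_meet (x y : E) : E := - bl_join L (- x) (- y).
Definition bl_abs (x : E) : E := bl_join L x (- x).

Definition sol (A : set E) : set E :=
  [set y | exists2 a, A a & bl_le (- bl_abs a) y /\ bl_le y (bl_abs a)].

Definition disjoint_seq (x : nat -> E) : Prop :=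
  forall n m, n <> m -> bl_meet (bl_abs (x n)) (bl_abs (x m)) = 0.

Definition Lwc_set (A : set E) : Prop :=
  forall x : nat -> E, disjoint_seq x -> (forall n, sol A (x n)) ->
    x @ \oo --> (0 : E).
End BL.

Section Ops.
Context {R : realType}.

Definition bounded_op {X Y : normedModType R} (T : X -> Y) : Prop :=
  (forall (a : R) (x y : X), T (a *: x + y) = a *: T x + T y) /\
  exists M : R, forall x, `|T x| <= M * `|x|.

Definition dual_elt {X : normedModType R} (f : X -> R^o) : Prop := bounded_op f.

Definition limited_set {X : normedModType R} (A : set X) : Prop :=
  (exists M : R, forall x, A x -> `|x| <= M) /\
  forall f : nat -> X -> R^o,
    (forall n, dual_elt (f n)) ->
    (forall x, (fun n => f n x) @ \oo --> (0 : R^o)) ->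
    forall eps : R, 0 < eps ->
      exists N : nat, forall n, (N <= n)%N -> forall x, A x -> `|f n x| <= eps.
End Ops.

Definition Lop {R : realType} (E : completeNormedModType R) : set (E -> E) :=
  [set T | bounded_op T].
Arguments Lop {R} E.

Definition lLwc {R : realType} {E : completeNormedModType R}
  (L : banach_lattice E) : set (E -> E) :=
  [set T | bounded_op T /\ forall A : set E, limited_set A -> Lwc_set L (T @` A)].

Definition op_subspace {R : realType} {E : completeNormedModType R}
  (J : set (E -> E)) : Prop :=
  J `<=` Lop E /\ J (fun _ => 0) /\
  (forall S T, J S -> J T -> J (fun x => S x + T x)) /\
  (forall (a : R) T, J T -> J (fun x => a *: T x)).

(* closed in the operator norm: ||T_n - T|| -> 0 written out *)
Definition op_norm_closed {R : realType} {E : completeNormedModType R}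
  (J : set (E -> E)) : Prop :=
  forall (Tn : nat -> E -> E) (T : E -> E),
    (forall n, J (Tn n)) -> Lop E T ->
    (forall eps : R, 0 < eps -> exists N : nat, forall n, (N <= n)%N ->
        forall x, `|Tn n x - T x| <= eps * `|x|) ->
    J T.

Definition right_ideal {R : realType} {E : completeNormedModType R}
  (J : set (E -> E)) : Prop :=
  forall T S, J T -> Lop E S -> J (T \o S).

Definition subalgebra {R : realType} {E : completeNormedModType R}
  (J : set (E -> E)) : Prop :=
  op_subspace J /\ forall S T, J S -> J T -> J (S \o T).

Definition unital_subalg {R : realType} {E : completeNormedModType R}
  (J : set (E -> E)) : Prop := subalgebra J /\ J idfun.

From HB Require Import structures.
From mathcomp Require Import all_boot all_order all_algebra.
From mathcomp Require Import all_classical all_reals all_analysis.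
Import Order.TTheory GRing.Theory Num.Theory.
Import numFieldNormedType.Exports.
Local Open Scope classical_set_scope.
Local Open Scope ring_scope.
Set Implicit Arguments. Unset Strict Implicit. Unset Printing Implicit Defensive.

(* Two stability properties of Lwc-sets carry the proof; both come from the
   Riesz decomposition property: a disjoint sequence dominated by |u_n| + |v_n|
   splits into two disjoint sequences dominated by |u_n| and |v_n|.  Hence
   the algebraic sum of two Lwc-sets is an Lwc-set, and so is any set that,
   for every e > 0, lies within e of some Lwc-set.  Bounded operators map
   limited sets to limited sets, so (S + T)(A) ⊆ S(A) + T(A), (T S)(A) =
   T(S(A)) and (k T)(A) = T(k A) give the algebraic closure properties,
   while ||T_n - T|| -> 0 puts T(A) uniformly close to the Lwc-set T_n(A). *)

Section BoundedOperators.
Context {R : realType}.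
Implicit Types X Y Z : normedModType R.

Lemma bounded_opZ X Y (T : X -> Y) k x : bounded_op T -> T (k *: x) = k *: T x.
Proof.
move=> [T_lin _]; have T0 : T 0 = 0.
  have := T_lin 1 0 0; rewrite !scale1r addr0.
  by move=> /(congr1 (fun v => v - T 0)); rewrite subrr addrK => <-.
by have := T_lin k x 0; rewrite addr0 T0 addr0.
Qed.

Lemma bounded_op_ge0_bound X Y (T : X -> Y) : bounded_op T ->
  exists2 M : R, 0 <= M & forall x, `|T x| <= M * `|x|.
Proof.
move=> [_ [M T_bnd]]; exists `|M| => // x.
by apply: le_trans (T_bnd x) _; rewrite ler_wpM2r // ler_norm.
Qed.

Lemma bounded_op_comp X Y Z (T : Y -> Z) (S : X -> Y) :
  bounded_op T -> bounded_op S -> bounded_op (T \o S).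
Proof.
move=> T_op S_op; have [T_lin _] := T_op; have [S_lin _] := S_op.
have [MT MT_ge0 T_bnd] := bounded_op_ge0_bound T_op.
have [MS _ S_bnd] := bounded_op_ge0_bound S_op.
split=> [a x y /=|]; first by rewrite S_lin T_lin.
exists (MT * MS) => x /=; apply: le_trans (T_bnd _) _.
by rewrite -mulrA ler_wpM2l.
Qed.

Lemma bounded_opD X Y (S T : X -> Y) :
  bounded_op S -> bounded_op T -> bounded_op (fun x => S x + T x).
Proof.
move=> [S_lin [MS S_bnd]] [T_lin [MT T_bnd]].
split=> [a x y|]; first by rewrite S_lin T_lin scalerDr addrACA.
exists (MS + MT) => x; rewrite mulrDl; apply: le_trans (ler_normD _ _) _.
exact: lerD.
Qed.

Lemma bounded_op_scaler X (k : R) : bounded_op (fun x : X => k *: x).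
Proof.
split=> [a x y|]; first by rewrite scalerDr !scalerA mulrC.
by exists `|k| => x; rewrite normrZ.
Qed.

Lemma bounded_op0 X Y : bounded_op (fun _ : X => 0 : Y).
Proof.
split=> [a x y|]; first by rewrite scaler0 addr0.
by exists 0 => x; rewrite normr0 mul0r.
Qed.

Lemma limited_set_image X Y (S : X -> Y) (A : set X) :
  bounded_op S -> limited_set A -> limited_set (S @` A).
Proof.
move=> S_op [[M A_bnd] A_lim]; have [MS MS_ge0 S_bnd] := bounded_op_ge0_bound S_op.
split=> [|f f_dual f_cvg e e_gt0].
  exists (MS * M) => _ [a Aa <-]; apply: le_trans (S_bnd a) _.
  by rewrite ler_wpM2l // A_bnd.
have fS_dual n : dual_elt (f n \o S) := bounded_op_comp (f_dual n) S_op.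
have [N N_spec] := A_lim _ fS_dual (fun x => f_cvg (S x)) e e_gt0.
by exists N => n Nn _ [a Aa <-]; apply: N_spec.
Qed.
End BoundedOperators.

Section BanachLattice.
Context {R : realType} {E : completeNormedModType R} (L : banach_lattice E).
Local Notation "x ⊑ y" := (bl_le L x y) (at level 70, no associativity).
Local Notation "x ⊔ y" := (bl_join L x y) (at level 50, left associativity).
Local Notation "|[ x ]|" := (bl_abs L x).

Lemma bl_le_refl x : x ⊑ x.
Proof. exact: bl_joinxx. Qed.

Lemma bl_le_trans y x z : x ⊑ y -> y ⊑ z -> x ⊑ z.
Proof. by rewrite /bl_le => xy yz; rewrite -yz bl_joinA xy. Qed.

Lemma bl_le_anti x y : x ⊑ y -> y ⊑ x -> x = y.
Proof. by rewrite /bl_le => xy yx; rewrite -xy bl_joinC yx. Qed.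

Lemma bl_le_joinl x y : x ⊑ x ⊔ y.
Proof. by rewrite /bl_le bl_joinA bl_joinxx. Qed.

Lemma bl_le_joinr x y : y ⊑ x ⊔ y.
Proof. by rewrite bl_joinC; apply: bl_le_joinl. Qed.

Lemma bl_join_le x y z : x ⊑ z -> y ⊑ z -> x ⊔ y ⊑ z.
Proof. by rewrite /bl_le => xz yz; rewrite -bl_joinA yz xz. Qed.

Lemma bl_le_join2 x y u v : x ⊑ y -> u ⊑ v -> x ⊔ u ⊑ y ⊔ v.
Proof.
move=> xy uv; apply: bl_join_le.
- exact: bl_le_trans xy (bl_le_joinl _ _).
- exact: bl_le_trans uv (bl_le_joinr _ _).
Qed.

Lemma bl_lerD2r z x y : x ⊑ y -> x + z ⊑ y + z.
Proof. exact: bl_le_add. Qed.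

Lemma bl_lerD x y u v : x ⊑ y -> u ⊑ v -> x + u ⊑ y + v.
Proof.
move=> xy uv; apply: bl_le_trans (bl_lerD2r u xy) _.
by rewrite ![y + _]addrC; apply: bl_lerD2r.
Qed.

Lemma bl_lerBlDr x y z : (x - z ⊑ y) <-> (x ⊑ y + z).
Proof.
split=> [/(bl_lerD2r z)|/(bl_lerD2r (- z))]; first by rewrite subrK.
by rewrite addrK.
Qed.

Lemma bl_lerN2 x y : x ⊑ y -> - y ⊑ - x.
Proof.
move=> /(bl_lerD2r (- x - y)).
by rewrite addrA subrr add0r addrCA subrr addr0.
Qed.

Lemma bl_lerDl x y : 0 ⊑ y -> x ⊑ x + y.
Proof. by move=> /(bl_lerD2r x); rewrite add0r addrC. Qed.

Lemma bl_oppr_le0 x : 0 ⊑ x -> - x ⊑ 0.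
Proof. by move=> /bl_lerN2; rewrite oppr0. Qed.

Lemma bl_le_abs x : x ⊑ |[x]|.
Proof. exact: bl_le_joinl. Qed.

Lemma bl_leN_abs x : - x ⊑ |[x]|.
Proof. exact: bl_le_joinr. Qed.

(* [0 = x - x ⊑ |x| + |x|], then halve. *)
Lemma bl_abs_ge0 x : 0 ⊑ |[x]|.
Proof.
have := bl_lerD (bl_le_abs x) (bl_leN_abs x); rewrite subrr.
have half_ge0 : 0 <= 2^-1 :> R by rewrite invr_ge0.
move=> /(bl_le_scale half_ge0).
have -> : 2^-1 *: (|[x]| + |[x]|) = |[x]| :> E.
  have halves : 2^-1 + 2^-1 = 1 :> R by rewrite [RHS]splitr mul1r.
  by rewrite scalerDr -scalerDl halves scale1r.
by rewrite scaler0.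
Qed.

Lemma bl_abs_id x : 0 ⊑ x -> |[x]| = x.
Proof.
move=> x_ge0; apply: bl_le_anti (bl_le_abs x).
apply: bl_join_le (bl_le_refl x) _.
exact: bl_le_trans (bl_oppr_le0 x_ge0) x_ge0.
Qed.

Lemma bl_abs_idem x : |[ |[x]| ]| = |[x]|.
Proof. exact/bl_abs_id/bl_abs_ge0. Qed.

Lemma bl_abs_le x y : - y ⊑ x -> x ⊑ y -> |[x]| ⊑ y.
Proof. by move=> /bl_lerN2; rewrite opprK => Nxy xy; apply: bl_join_le. Qed.

Lemma bl_abs_lerD u v : |[u + v]| ⊑ |[u]| + |[v]|.
Proof.
apply: bl_join_le; first exact: bl_lerD (bl_le_abs u) (bl_le_abs v).
by rewrite opprD; apply: bl_lerD (bl_leN_abs u) (bl_leN_abs v).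
Qed.

Lemma bl_riesz_decomposition p q w : 0 ⊑ p -> 0 ⊑ q -> 0 ⊑ w -> p ⊑ q + w ->
  exists y z, [/\ p = y + z, 0 ⊑ y, y ⊑ q, 0 ⊑ z & z ⊑ w].
Proof.
move=> p_ge0 q_ge0 w_ge0 p_le_qw.
pose z := 0 ⊔ (p - q).
have z_le_p : z ⊑ p.
  apply: bl_join_le p_ge0 _; apply/bl_lerBlDr; exact: bl_lerDl.
exists (p - z), z; split.
- by rewrite subrK.
- by move/(bl_lerD2r (- z)): z_le_p; rewrite subrr.
- by apply/bl_lerBlDr; rewrite addrC; apply/bl_lerBlDr; apply: bl_le_joinr.
- exact: bl_le_joinl.
- by apply: bl_join_le w_ge0 _; apply/bl_lerBlDr; rewrite addrC.
Qed.

Lemma bl_meet_eq0_le x1 x2 y1 y2 : 0 ⊑ y1 -> y1 ⊑ x1 -> 0 ⊑ y2 -> y2 ⊑ x2 ->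
  bl_meet L x1 x2 = 0 -> bl_meet L y1 y2 = 0.
Proof.
rewrite /bl_meet => y1_ge0 y1x1 y2_ge0 y2x2 /eqP; rewrite oppr_eq0 => /eqP x12.
apply/eqP; rewrite oppr_eq0; apply/eqP/bl_le_anti.
- exact: bl_join_le (bl_oppr_le0 y1_ge0) (bl_oppr_le0 y2_ge0).
- by rewrite -x12; apply: bl_le_join2; apply: bl_lerN2.
Qed.

Lemma bl_norm_abs x : `| |[x]| | = `|x|.
Proof.
apply/eqP; rewrite eq_le; apply/andP; split; apply: (@bl_norm_mono _ _ L).
- by change (|[ |[x]| ]| ⊑ |[x]|); rewrite bl_abs_idem; apply: bl_le_refl.
- by change (|[x]| ⊑ |[ |[x]| ]|); rewrite bl_abs_idem; apply: bl_le_refl.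
Qed.

Lemma bl_norm_le y w : 0 ⊑ y -> y ⊑ w -> `|y| <= `|w|.
Proof.
move=> y_ge0 yw; apply: (@bl_norm_mono _ _ L); change (|[y]| ⊑ |[w]|).
by rewrite !bl_abs_id //; apply: bl_le_trans yw.
Qed.

Lemma sol_le_abs A a c : A a -> 0 ⊑ c -> c ⊑ |[a]| -> sol L A c.
Proof.
move=> Aa c_ge0 c_le; exists a => //; split=> //.
exact: bl_le_trans (bl_oppr_le0 (bl_abs_ge0 a)) c_ge0.
Qed.

Lemma sol_abs_le A c : sol L A c -> exists2 a, A a & |[c]| ⊑ |[a]|.
Proof. by move=> [a Aa [Nac ca]]; exists a => //; apply: bl_abs_le. Qed.

Lemma disjoint_seq_le x y : disjoint_seq L x ->
  (forall n, 0 ⊑ y n /\ y n ⊑ |[x n]|) -> disjoint_seq L y.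
Proof.
move=> x_disj y_le n m nm; have [yn_ge0 yn_le] := y_le n; have [ym_ge0 ym_le] := y_le m.
rewrite !bl_abs_id //; exact: bl_meet_eq0_le yn_ge0 yn_le ym_ge0 ym_le (x_disj n m nm).
Qed.

Lemma disjoint_seq_split x u v : disjoint_seq L x ->
  (forall n, |[x n]| ⊑ |[u n]| + |[v n]|) ->
  exists y z, [/\ disjoint_seq L y, disjoint_seq L z,
    forall n, 0 ⊑ y n /\ y n ⊑ |[u n]|, forall n, 0 ⊑ z n /\ z n ⊑ |[v n]| &
    forall n, `|x n| <= `|y n| + `|z n|].
Proof.
move=> x_disj x_le.
have /choice[y /choice[z yz_spec]] := fun n => bl_riesz_decomposition
  (bl_abs_ge0 (x n)) (bl_abs_ge0 (u n)) (bl_abs_ge0 (v n)) (x_le n).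
have y_le n : 0 ⊑ y n /\ y n ⊑ |[x n]|.
  have [-> y_ge0 _ z_ge0 _] := yz_spec n; split=> //; exact: bl_lerDl.
have z_le n : 0 ⊑ z n /\ z n ⊑ |[x n]|.
  have [-> y_ge0 _ z_ge0 _] := yz_spec n; split=> //.
  by rewrite addrC; apply: bl_lerDl.
exists y, z; split.
- exact: disjoint_seq_le y_le.
- exact: disjoint_seq_le z_le.
- by move=> n; have [] := yz_spec n.
- by move=> n; have [] := yz_spec n.
- move=> n; rewrite -(bl_norm_abs (x n)); have [-> _ _ _ _] := yz_spec n.
  exact: ler_normD.
Qed.

Lemma Lwc_set_sub A B : A `<=` B -> Lwc_set L B -> Lwc_set L A.
Proof.
move=> AB LB x x_disj x_sol; apply: LB x_disj _ => n.
by have [a Aa a_spec] := x_sol n; exists a => //; apply: AB.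
Qed.

Lemma Lwc_set0 : Lwc_set L [set 0].
Proof.
move=> x _ x_sol; suff -> : x = fun=> 0 by apply: cvg_cst.
apply: funext => n; have [_ -> []] := x_sol n.
rewrite bl_abs_id ?oppr0; last exact: bl_le_refl.
by move=> x_ge0 x_le0; apply: (bl_le_anti x_le0 x_ge0).
Qed.

Lemma Lwc_setD A B : Lwc_set L A -> Lwc_set L B ->
  Lwc_set L [set a + b | a in A & b in B].
Proof.
move=> LA LB x x_disj x_sol.
have /choice[ab ab_spec] : forall n,
    exists ab : E * E, [/\ A ab.1, B ab.2 & |[x n]| ⊑ |[ab.1]| + |[ab.2]|].
  move=> n; have [_ [a Aa [b Bb <-]] x_le] := sol_abs_le (x_sol n).
  by exists (a, b); split=> //; apply: bl_le_trans x_le (bl_abs_lerD a b).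
have x_le n : |[x n]| ⊑ |[(ab n).1]| + |[(ab n).2]| by have [] := ab_spec n.
have [y [z [y_disj z_disj y_le z_le x_norm]]] := disjoint_seq_split x_disj x_le.
have y0 : y @ \oo --> (0 : E).
  apply: LA y_disj _ => n; have [Aa _ _] := ab_spec n; have [] := y_le n.
  exact: sol_le_abs Aa.
have z0 : z @ \oo --> (0 : E).
  apply: LB z_disj _ => n; have [_ Bb _] := ab_spec n; have [] := z_le n.
  exact: sol_le_abs Bb.
apply/cvgr0Pnorm_le => e e_gt0; near=> n.
rewrite (splitr e); apply: le_trans (x_norm n) (lerD _ _); near: n.
- by apply: cvgr0_norm_le y0 _ _; rewrite divr_gt0.
- by apply: cvgr0_norm_le z0 _ _; rewrite divr_gt0.
Unshelve. all: by end_near.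
Qed.

Lemma Lwc_set_approx A :
  (forall e, 0 < e -> exists2 B, Lwc_set L B &
     forall a, A a -> exists2 b, B b & `|a - b| <= e) ->
  Lwc_set L A.
Proof.
move=> approx x x_disj x_sol; apply/cvgr0Pnorm_le => e e_gt0.
have e2_gt0 : 0 < e / 2 by rewrite divr_gt0.
have [B LB approxB] := approx _ e2_gt0.
have /choice[ab ab_spec] : forall n, exists ab : E * E,
    [/\ B ab.2, `|ab.1 - ab.2| <= e / 2 & |[x n]| ⊑ |[ab.2]| + |[ab.1 - ab.2]|].
  move=> n; have [a Aa x_le] := sol_abs_le (x_sol n).
  have [b Bb ab_le] := approxB a Aa.
  exists (a, b); split=> //=; apply: bl_le_trans x_le _.
  by have := bl_abs_lerD b (a - b); rewrite addrC subrK.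
have x_le n : |[x n]| ⊑ |[(ab n).2]| + |[(ab n).1 - (ab n).2]|.
  by have [] := ab_spec n.
have [y [z [y_disj _ y_le z_le x_norm]]] := disjoint_seq_split x_disj x_le.
have y0 : y @ \oo --> (0 : E).
  apply: LB y_disj _ => n; have [Bb _ _] := ab_spec n; have [] := y_le n.
  exact: sol_le_abs Bb.
have z_small n : `|z n| <= e / 2.
  have [z_ge0 z_le_ab] := z_le n; have [_ ab_small _] := ab_spec n.
  by rewrite -bl_norm_abs in ab_small; apply: le_trans (bl_norm_le z_ge0 z_le_ab) _.
near=> n; rewrite (splitr e); apply: le_trans (x_norm n) (lerD _ (z_small n)).
by near: n; apply: cvgr0_norm_le y0 _ _.
Unshelve. all: by end_near.
Qed.

Lemma lLwc0 : lLwc L (fun _ => 0).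
Proof.
split=> [|A _]; first exact: bounded_op0.
by apply: (Lwc_set_sub _ Lwc_set0) => _ [a _ <-].
Qed.

Lemma lLwcD S T : lLwc L S -> lLwc L T -> lLwc L (fun x => S x + T x).
Proof.
move=> [S_op S_lwc] [T_op T_lwc]; split=> [|A A_lim]; first exact: bounded_opD.
apply: (Lwc_set_sub _ (Lwc_setD (S_lwc A A_lim) (T_lwc A A_lim))).
by move=> _ [a Aa <-]; exists (S a); [exists a | exists (T a); [exists a|]].
Qed.

Lemma lLwc_comp T S : lLwc L T -> bounded_op S -> lLwc L (T \o S).
Proof.
move=> [T_op T_lwc] S_op; split=> [|A A_lim]; first exact: bounded_op_comp.
apply: (Lwc_set_sub _ (T_lwc _ (limited_set_image S_op A_lim))).
by move=> _ [a Aa <-]; exists (S a); [exists a|].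
Qed.

Lemma lLwcZ k T : lLwc L T -> lLwc L (fun x => k *: T x).
Proof.
move=> T_lwc; have -> : (fun x => k *: T x) = T \o (fun x => k *: x).
  by apply: funext => x /=; rewrite (bounded_opZ _ _ T_lwc.1).
apply: (lLwc_comp T_lwc); exact: bounded_op_scaler.
Qed.

Lemma lLwc_closed : op_norm_closed (lLwc L).
Proof.
move=> Tn T Tn_lwc T_op Tn_cvg; split=> // A A_lim.
have [[M A_bnd] _] := A_lim.
apply: Lwc_set_approx => e e_gt0.
have M1_gt0 : 0 < `|M| + 1 by rewrite ltr_wpDl.
have [N N_spec] := Tn_cvg (e / (`|M| + 1)) (divr_gt0 e_gt0 M1_gt0).
exists (Tn N @` A); first exact: (Tn_lwc N).2.
move=> _ [a Aa <-]; exists (Tn N a); first by exists a.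
rewrite distrC; apply: le_trans (N_spec N (leqnn N) a) _.
rewrite -[leRHS](divfK (lt0r_neq0 M1_gt0)) ler_wpM2l ?divr_ge0 ?(ltW e_gt0) //.
apply: le_trans (A_bnd a Aa) _; apply: le_trans (ler_norm M) _.
by rewrite lerDl.
Qed.
End BanachLattice.

Theorem corollary3p3 (R : realType) (E : completeNormedModType R)
  (L : banach_lattice E) :
  [/\ op_subspace (lLwc L), op_norm_closed (lLwc L), right_ideal (lLwc L),
      subalgebra (lLwc L) &
      (unital_subalg (lLwc L) <-> lLwc L idfun)].
Proof.
have subspace : op_subspace (lLwc L).
  split=> [T [] //|]; split; first exact: lLwc0.
  by split=> [S T|a T]; [apply: lLwcD | apply: lLwcZ].
have ideal : right_ideal (lLwc L) by move=> T S; apply: lLwc_comp.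
have subalg : subalgebra (lLwc L) by split=> // S T S_lwc [T_op _]; apply: ideal.
split=> //; first exact: lLwc_closed.
by split=> [[]|].
Qed.
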